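(* Let $d\ge 2$ and $\ell\ge 2$. The girth $g$ (length of a shortest directed cycle) of the cyclic Kautz digraph $CK(d,\ell)$ satisfies $g\ge k_0$, where $k_0$ is the smallest positive integer $k$ such that $\ell\not\equiv 1 \pmod k$.
   Context: The cyclic Kautz digraph $CK(d,\ell)$ has vertex set $\{x_1\ldots x_\ell\in\mathbb Z_{d+1}^\ell : x_i\neq x_{i+1}\ (1\le i\le \ell-1),\ x_\ell\neq x_1\}$ and arcs $x_1x_2\ldots x_\ell\to x_2\ldots x_\ell y$ for every $y\in\mathbb Z_{d+1}$ with $y\neq x_2,x_\ell$. *)

From mathcomp Require Import all_boot.
Unset Strict Implicit. Unset Printing Implicit Defensive.

(* Vertices of CK(d,l): words x_1..x_l over Z_{d+1} (modelled by 'I_d.+1;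
   only equality of letters matters), written as seqs of size l with
   0-based indices: x_i <> x_{i+1} for consecutive letters and x_l <> x_1. *)
Definition ck_vertex (d l : nat) (x : seq 'I_d.+1) : Prop :=
  size x = l /\
  (forall i, i.+1 < l -> nth ord0 x i <> nth ord0 x i.+1) /\
  nth ord0 x l.-1 <> nth ord0 x 0.

Definition ck_arc (d l : nat) (x y : seq 'I_d.+1) : Prop :=
  ck_vertex d l x /\ ck_vertex d l y /\
  exists z : 'I_d.+1, z <> nth ord0 x 1 /\ z <> nth ord0 x l.-1 /\
                      y = rcons (behead x) z.

Definition ck_dicycle (d l : nat) (c : seq (seq 'I_d.+1)) : Prop :=
  0 < size c /\ uniq c /\
  forall i, i < size c ->
    ck_arc d l (nth [::] c i) (nth [::] c (i.+1 %% size c)).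

Lemma k0_exists (l : nat) : 1 < l -> exists k, (0 < k) && (l != 1 %[mod k]).
Proof.
move=> hl; exists l; rewrite (ltnW hl) /= modnn modn_small //.
Qed.

Definition k0 (l : nat) (hl : 1 < l) : nat := ex_minn (@k0_exists l hl).

From mathcomp Require Import all_boot.
From mathcomp Require Import zify.

(* Each arc shifts the word one letter to the left, so after a closed walk
   of length k the word x_1 ... x_l of its start satisfies x_i = x_{i+k}.
   If k < k0 then k divides l - 1, and periodicity gives x_l = x_1, which
   the definition of a vertex forbids. *)

Lemma k0_minimal (l : nat) (hl : 1 < l) (k : nat) :
  0 < k -> k < @k0 l hl -> l = 1 %[mod k].
Proof.
rewrite /k0; case: ex_minnP => m _ hmin kpos ltkm.
apply/eqP/negPn/negP => hneq.
by move: (hmin k); rewrite kpos hneq leqNgt ltkm => /(_ isT).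
Qed.

Section ShiftWalk.

Context {d l : nat}.

Lemma ck_arc_nth {x y : seq 'I_d.+1} {i : nat} :
  ck_arc d l x y -> i.+1 < l -> nth ord0 y i = nth ord0 x i.+1.
Proof.
case=> [[sz_x _] [_ [z [_ [_ ->]]]]] lt_il.
by rewrite nth_rcons size_behead sz_x ifT ?nth_behead //; lia.
Qed.

Lemma ck_walk_nth {w : nat -> seq 'I_d.+1} {n : nat} :
  (forall j, j < n -> ck_arc d l (w j) (w j.+1)) ->
  forall j i, j <= n -> i + j < l -> nth ord0 (w j) i = nth ord0 (w 0) (i + j).
Proof.
move=> arc_w; elim=> [|j IHj] i le_jn lt_il; first by rewrite addn0.
rewrite (ck_arc_nth (arc_w j le_jn)); last by lia.
by rewrite IHj ?addSnnS //; lia.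
Qed.

End ShiftWalk.

Lemma periodic_eq0 {T : Type} {f : nat -> T} {n k : nat} :
  (forall i, i + k < n -> f i = f (i + k)) ->
  forall m, m * k < n -> f (m * k) = f 0.
Proof.
move=> per; elim=> [|m IHm] lt_mkn //.
by rewrite mulSn addnC -per; [apply: IHm|]; lia.
Qed.

Lemma periodic_last {T : Type} {f : nat -> T} {n k : nat} :
  0 < n -> k %| n.-1 ->
  (forall i, i + k < n -> f i = f (i + k)) -> f n.-1 = f 0.
Proof.
move=> n_gt0 dvd_k per; case: (posnP k) dvd_k => [-> | k_gt0] dvd_k.
  by move: dvd_k; rewrite dvd0n => /eqP ->.
rewrite -(divnK dvd_k); apply: (periodic_eq0 per).
by rewrite divnK //; lia.
Qed.

Lemma ck_dicycle_periodic (d l : nat) (c : seq (seq 'I_d.+1)) :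
  ck_dicycle d l c -> forall i, i + size c < l ->
  nth ord0 (nth [::] c 0) i = nth ord0 (nth [::] c 0) (i + size c).
Proof.
case=> k_gt0 [_ arc_c] i lt_il.
set k := size c in k_gt0 arc_c lt_il *.
pose w j := nth [::] c (j %% k).
have arc_w j : j < k -> ck_arc d l (w j) (w j.+1).
  rewrite /w; have -> : j.+1 %% k = (j %% k).+1 %% k.
    by rewrite -[j.+1]addn1 -[(j %% k).+1]addn1 modnDml.
  by move=> _; apply: arc_c; rewrite ltn_mod.
have := ck_walk_nth arc_w k i (leqnn k) lt_il.
by rewrite /w modnn mod0n.
Qed.

Theorem mainTheorem9 (d l : nat) (hd : 2 <= d) (hl : 1 < l)
  (c : seq (seq 'I_d.+1)) :
  ck_dicycle d l c -> @k0 l hl <= size c.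
Proof.
move=> cyc; rewrite leqNgt; apply/negP => lt_k_k0.
have k_gt0 : 0 < size c by case: cyc.
have dvd_k : size c %| l.-1.
  by rewrite -subn1 -eqn_mod_dvd ?(ltnW hl) //; apply/eqP/k0_minimal.
have [_ [_ last_neq_first]] : ck_vertex d l (nth [::] c 0).
  by case: cyc => _ [_ arc_c]; case: (arc_c 0 k_gt0).
apply: last_neq_first; apply: periodic_last dvd_k _; first lia.
exact: ck_dicycle_periodic cyc.
Qed.
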